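(* Let $v=v_0v_1\cdots$ be an aperiodic infinite word over $\{0,1\}$ with $h(\ell)$ the number of $1$'s among its first $\ell$ digits, and suppose $\liminf_{\ell\to\infty}h(\ell)/\ell>\ln2/\ln3$. Then the set $\{\Phi_{\mathbb{R}}(v_kv_{k+1}\cdots):k\ge0\}$ (the orbit of $\Phi_{\mathbb{R}}(v)$) is an infinite subset of $\mathbb{R}$ having at least one accumulation point in $\mathbb{R}$.
   Context: For an infinite $0$-$1$ word $w$ with $1$'s at positions $d_0<d_1<\cdots$, $\Phi_{\mathbb{R}}(w)$ is the real sum $-\sum_{i\ge0}2^{d_i}/3^{i+1}$, said to exist if the series converges (under the hypothesis, all $\Phi_{\mathbb{R}}(v_kv_{k+1}\cdots)$ exist). Aperiodic means not eventually periodic. *)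

From mathcomp Require Import all_boot all_order all_algebra.
From mathcomp Require Import all_classical all_reals all_analysis.
Set Implicit Arguments. Unset Strict Implicit. Unset Printing Implicit Defensive.
Import Order.TTheory GRing.Theory Num.Theory numFieldNormedType.Exports.
Local Open Scope ring_scope.

(* infinite 0-1 words: w : nat -> bool, true = 1 *)

Definition ones (w : nat -> bool) (l : nat) : nat := \sum_(i < l) (w i : nat).

Definition shiftw (w : nat -> bool) (k : nat) : nat -> bool := fun n => w (k + n).

(* The term of Phi_R at position n: if w_n = 1 and n = d_i (so i = ones w n,
   the number of 1's strictly before n), the term is 2^{d_i}/3^{i+1};
   otherwise 0.  Thus sum_n phi_term w n = sum_i 2^{d_i}/3^{i+1}. *)
Definition phi_term {R : realType} (w : nat -> bool) (n : nat) : R :=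
  if w n then 2 ^+ n / 3 ^+ (ones w n).+1 else 0.

Definition phi_exists {R : realType} (w : nat -> bool) : Prop :=
  cvgn (series (@phi_term R w)).

Definition PhiR {R : realType} (w : nat -> bool) : R :=
  - limn (series (@phi_term R w)).

Definition eventually_periodic (w : nat -> bool) : Prop :=
  exists p N : nat, (0 < p)%N /\ forall n, (N <= n)%N -> w (n + p) = w n.

Definition aperiodic (w : nat -> bool) : Prop := ~ eventually_periodic w.

(* Write x_k = Phi_R(v_k v_{k+1} ...).  Peeling off the first digit gives the backward
   recursion x_k = B_{v_k}(x_{k+1}) with the inverse branches B_0 y = 2y and
   B_1 y = (2y - 1)/3.  The file proceeds in three independent parts.
   1. Arithmetic: rationals with odd denominator are stable under both branches, B_0
      lands in the even ones and B_1 in the odd ones, so (b, y) |-> B_b y is injective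
      there.  Unwinding the recursion between two occurrences of a value shows it has odd
      denominator; hence a value recurring in the orbit makes v eventually periodic.
   2. Analysis: if every prefix of w has density of 1's at least r > ln 2 / ln 3, the
      series of Phi_R(w) is dominated by a geometric series of ratio 2 / 3^r < 1, so
      Phi_R(w) exists and is bounded by 1 / (1 - 2 / 3^r).
   3. Density: the liminf hypothesis yields r > ln 2 / ln 3 whose excess h(l) - r l grows
      linearly; its right minima are unbounded, and the shift of v at a right minimum
      satisfies the hypothesis of part 2.
   The theorem follows: every shift exists (backwards from a later right minimum), the
   orbit is bounded along the right minima, takes infinitely many values there by part 1
   and aperiodicity, and an infinite bounded set of reals has a limit point. *)

From mathcomp Require Import all_boot all_order all_algebra.
From mathcomp Require Import all_classical all_reals all_analysis.
From mathcomp Require Import ring lra zify.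
Import Order.TTheory GRing.Theory Num.Theory numFieldNormedType.Exports.
Local Open Scope ring_scope.
Local Open Scope classical_set_scope.

Lemma ones_shift w k n : ones w (k + n)%N = (ones w k + ones (shiftw w k) n)%N.
Proof. by rewrite /ones big_split_ord. Qed.

Lemma shiftw_shiftw w k n : shiftw (shiftw w k) n = shiftw w (k + n)%N.
Proof. by apply/funext => i; rewrite /shiftw /=; congr w; exact: addnA. Qed.

Section InverseBranches.
Context {R : numFieldType}.

(* The two inverse branches of the digit dynamics: peeling off a leading digit b
   of w turns Phi_R(shift w 1) into Phi_R(w) = branch b (Phi_R(shift w 1)). *)
Definition branch (b : bool) (y : R) : R := if b then (2 * y - 1) / 3 else 2 * y.

Definition two_adic (y : R) : Prop :=
  exists p q : int, odd `|q| /\ y * q%:~R = p%:~R.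

Lemma two_adic_branch b (y : R) : two_adic y -> two_adic (branch b y).
Proof.
case=> p [q [oq e]]; case: b => /=.
- exists (2 * p - q), (3 * q); split; first by rewrite abszM oddM oq.
  by rewrite !(intrM, intrB) -e /=; field.
- by exists (2 * p); exists q; split => //; rewrite intrM -e mulrA.
Qed.

Definition two_adic_even (z : R) : Prop :=
  exists p q : int, odd `|q| /\ z * q%:~R = (2 * p)%:~R.

Definition two_adic_odd (z : R) : Prop :=
  exists p q : int, odd `|q| /\ z * q%:~R = (2 * p - q)%:~R.

(* No 2-adic integer is both even and odd: the denominators would clash mod 2. *)
Lemma two_adic_even_odd {z : R} : two_adic_even z -> two_adic_odd z -> False.
Proof.
move=> [p1 [q1 [h1 e1]]] [p2 [q2 [h2 e2]]].
have /intr_inj E : ((2 * p1) * q2)%:~R = ((2 * p2 - q2) * q1)%:~R :> R.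
  by move: e1 e2; rewrite !(intrM, intrB) => e1 e2; rewrite -e1 -e2; ring.
have E2 : 2 * (p1 * q2 - p2 * q1) = - (q2 * q1) by lia.
move: (congr1 (fun z : int => odd `|z|) E2) => /=.
by rewrite abszN !abszM !oddM h1 h2.
Qed.

Lemma branch_parity b {y : R} : two_adic y ->
  if b then two_adic_odd (branch b y) else two_adic_even (branch b y).
Proof.
case=> p [q [oq e]]; case: b => /=.
- exists (p + q), (3 * q); split; first by rewrite abszM oddM oq.
  by rewrite !(intrM, intrB, intrD) -e /=; field.
- by exists p; exists q; split => //; rewrite intrM -e mulrA.
Qed.

Lemma branch_inj b : injective (branch b).
Proof.
move=> y1 y2; case: b => /= e; apply/eqP; rewrite -subr_eq0.
- have -> : y1 - y2 = ((2 * y1 - 1) / 3 - (2 * y2 - 1) / 3) * 3 / 2 by field.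
  by rewrite e subrr !mul0r.
- have -> : y1 - y2 = (2 * y1 - 2 * y2) / 2 by field.
  by rewrite e subrr mul0r.
Qed.

(* On 2-adic integers the value branch b y determines both the digit b (by parity)
   and the argument y (by injectivity). *)
Lemma branch_det b1 b2 (y1 y2 : R) : two_adic y1 -> two_adic y2 ->
  branch b1 y1 = branch b2 y2 -> b1 = b2 /\ y1 = y2.
Proof.
move=> z1 z2 e.
have eb : b1 = b2.
  move: (branch_parity b1 z1) (branch_parity b2 z2); rewrite e {e}.
  by case: b1; case: b2 => // h1 h2;
    [case: (two_adic_even_odd h2 h1) | case: (two_adic_even_odd h1 h2)].
by split => //; subst b2; exact: branch_inj e.
Qed.

End InverseBranches.

Section BackwardOrbit.
Context {R : numFieldType}.
Variables (x : nat -> R) (v : nat -> bool).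
Hypothesis orbit : forall k, x k = branch (v k) (x k.+1).

Lemma orbit_affine k m : exists a c : nat, x k * 3 ^+ a + c%:R = 2 ^+ m * x (k + m)%N.
Proof.
elim: m => [|m [a [c e]]].
  by exists 0%N, 0%N; rewrite addn0 expr0 mulr1 mul1r addr0.
have := orbit (k + m)%N; rewrite addnS; case: (v (k + m)%N) => /= ex.
- exists a.+1, (3 * c + 2 ^ m)%N.
  have -> : x k * 3 ^+ a.+1 + (3 * c + 2 ^ m)%N%:R =
     3 * (x k * 3 ^+ a + c%:R) + 2 ^+ m by rewrite natrD natrM natrX exprS; ring.
  by rewrite e ex exprS; field.
- by exists a, c; rewrite e ex exprS; ring.
Qed.

Lemma two_adic_orbit_back k n : two_adic (x (k + n)%N) -> two_adic (x k).
Proof.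
elim: n k => [|n IH] k; first by rewrite addn0.
by rewrite addnS -addSn => /IH; rewrite (orbit k); exact: two_adic_branch.
Qed.

(* A value taken at two times k < j satisfies y 3^a + c = 2^(j-k) y, so it is a
   rational whose denominator 3^a - 2^(j-k) is odd. *)
Lemma two_adic_of_return {k j : nat} {y : R} : (k < j)%N -> x k = y -> x j = y -> two_adic y.
Proof.
move=> kj xk xj; have [a [c e]] := orbit_affine k (j - k).
rewrite subnKC ?(ltnW kj) // xk xj in e.
have even2 : ~~ odd (2 ^ (j - k)) by rewrite oddX /= negb_or andbT -lt0n subn_gt0.
have odd3 : odd (3 ^ a) by rewrite oddX orbT.
have {}e : y * (3 ^ a)%:R + c%:R = (2 ^ (j - k))%:R * y by rewrite !natrX.
move: e even2 odd3; move: (2 ^ (j - k))%N (3 ^ a)%N => P Q e evP oddQ.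
have [PQ | QP] := leqP P Q.
- exists (- c%:Z), (Q - P)%N; split; first by rewrite absz_nat oddB // oddQ (negbTE evP).
  by rewrite intrN -!pmulrn natrB // mulrBr [y * P%:R]mulrC -e; ring.
- exists c%:Z, (P - Q)%N; split; first by rewrite absz_nat (oddB (ltnW QP)) oddQ (negbTE evP).
  by rewrite -!pmulrn (natrB _ (ltnW QP)) mulrBr [y * P%:R]mulrC -e; ring.
Qed.

(* A value recurring infinitely often forces v to be eventually periodic: the whole
   orbit is 2-adic, and by branch_det two equal values x_k = x_j propagate forward,
   making v repeat with period j - k from k on. *)
Lemma recurrent_periodic y : (forall N, exists2 j, (N <= j)%N & x j = y) ->
  eventually_periodic v.
Proof.
move=> rec_y; have [k _ xk] := rec_y 0%N; have [j kj xj] := rec_y k.+1.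
have two_adic_y := two_adic_of_return kj xk xj.
have two_adic_x n : two_adic (x n).
  have [i ni xi] := rec_y n; apply: (@two_adic_orbit_back n (i - n)).
  by rewrite subnKC // xi.
have sync n : x (k + n)%N = x (j + n)%N ->
    v (k + n)%N = v (j + n)%N /\ x (k + n).+1 = x (j + n).+1.
  by rewrite orbit [x (j + n)%N]orbit => /branch_det; apply.
have same_x n : x (k + n)%N = x (j + n)%N.
  elim: n => [|n IH]; first by rewrite !addn0 xk xj.
  by rewrite !addnS; exact: (sync n IH).2.
exists (j - k)%N, k; split; first by rewrite subn_gt0.
move=> n kn; have := (sync (n - k)%N (same_x _)).1.
have -> : (k + (n - k) = n)%N by lia.
by have -> : (j + (n - k) = n + (j - k))%N by lia.
Qed.

End BackwardOrbit.

Section PhiSeries.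
Context {R : realType}.

Lemma phi_termS w n : @phi_term R w n.+1 =
  (if w 0%N then 2 / 3 else 2) * @phi_term R (shiftw w 1) n.
Proof.
rewrite /phi_term -add1n ones_shift /ones big_ord1 /shiftw.
case: (w (1 + n)%N); last by rewrite mulr0.
by case: (w 0%N); rewrite /= ?add1n ?add0n !exprS; field.
Qed.

Lemma seriesS_phi w n : series (@phi_term R w) n.+1 =
  @phi_term R w 0 + (if w 0%N then 2 / 3 else 2) * series (@phi_term R (shiftw w 1)) n.
Proof.
elim: n => [|n IH]; first by rewrite seriesS /series /= !big_geq // addr0 mulr0 addr0.
by rewrite seriesSr IH seriesSr phi_termS mulrDr addrA.
Qed.

Lemma PhiR_shift w : phi_exists (R := R) (shiftw w 1) ->
  phi_exists (R := R) w /\ PhiR (R := R) w = branch (w 0%N) (PhiR (R := R) (shiftw w 1)).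
Proof.
move=> /cvg_ex[l cvg_l].
set L := @phi_term R w 0 + (if w 0%N then 2 / 3 else 2) * l.
have cvg_L : series (@phi_term R w) @ \oo --> L.
  rewrite -cvg_shiftS; under eq_fun do rewrite seriesS_phi.
  by apply: cvgD; [exact: cvg_cst | exact: cvgMr].
split; first by apply/cvg_ex; exists L.
rewrite /PhiR (cvg_lim (@Rhausdorff R) cvg_L) (cvg_lim (@Rhausdorff R) cvg_l) /L.
by rewrite /phi_term /ones big_ord0; case: (w 0%N); rewrite /= ?expr0 ?expr1; field.
Qed.

Lemma phi_exists_back w k n : phi_exists (R := R) (shiftw w (k + n)%N) ->
  phi_exists (R := R) (shiftw w k).
Proof.
elim: n k => [|n IH] k; first by rewrite addn0.
by rewrite addnS -addSn => /IH; rewrite -addn1 -shiftw_shiftw => /PhiR_shift[].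
Qed.

Lemma PhiR_orbit {w} : (forall k, phi_exists (R := R) (shiftw w k)) ->
  forall k, PhiR (R := R) (shiftw w k) = branch (w k) (PhiR (R := R) (shiftw w k.+1)).
Proof.
move=> ex k; have := ex k.+1; rewrite -addn1 -shiftw_shiftw => /PhiR_shift[_ ->].
by rewrite shiftw_shiftw addn1 /shiftw; congr branch; congr w; exact: addn0.
Qed.

End PhiSeries.

Section GeometricBound.
Context {R : realType}.

(* When the 1's have density at least r in every prefix, the terms of Phi_R are
   dominated by the geometric sequence of this ratio, 2 / 3^r. *)
Definition ratio (r : R) : R := 2 / expR (r * ln 3).

Lemma ln3_gt0 : 0 < ln (3 : R).
Proof. by apply: ln_gt0; lra. Qed.

Lemma ratio_ge0 r : 0 <= ratio r.
Proof. by rewrite divr_ge0 ?expR_ge0. Qed.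

Lemma ratio_lt1 r : ln 2 / ln 3 < r -> ratio r < 1.
Proof.
move=> hr; rewrite ltr_pdivrMr ?expR_gt0 // mul1r.
have -> : (2 : R) = expR (ln 2) by rewrite lnK // posrE; lra.
by rewrite ltr_expR -ltr_pdivrMr // ln3_gt0.
Qed.

Lemma phi_term_geom w r : (forall n, r * n%:R <= (ones w n)%:R) ->
  forall n, 0 <= @phi_term R w n <= ratio r ^+ n.
Proof.
move=> dense n; rewrite /phi_term; case: (w n); last by rewrite lexx exprn_ge0 // ratio_ge0.
set m := ones w n; have l3 := @ln3_gt0.
have pow_le : expR (r * ln 3) ^+ n <= 3 ^+ m.+1.
  have -> : (3 : R) ^+ m.+1 = expR (m.+1%:R * ln 3) by rewrite expRM_natl lnK // posrE.
  rewrite -expRM_natl ler_expR mulrA [_ * r]mulrC ler_pM2r //.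
  by apply: le_trans (dense n) _; rewrite ler_nat.
rewrite /ratio expr_div_n divr_ge0 ?exprn_ge0 //= ler_wpM2l ?exprn_ge0 //.
by rewrite lef_pV2 ?posrE ?exprn_gt0 ?expR_gt0.
Qed.

Lemma phi_bound {w r} : ln 2 / ln 3 < r -> (forall n, r * n%:R <= (ones w n)%:R) ->
  phi_exists (R := R) w /\ `|PhiR (R := R) w| <= (1 - ratio r)^-1.
Proof.
move=> hr /phi_term_geom geom; set q := ratio r.
have term_ge0 n : 0 <= @phi_term R w n by case/andP: (geom n).
have term_le n : @phi_term R w n <= geometric 1 q n by rewrite /= mul1r; case/andP: (geom n).
have cvg_geom : series (geometric 1 q) @ \oo --> 1 * (1 - q)^-1.
  by apply: cvg_geometric_series; rewrite ger0_norm ?ratio_ge0 ?ratio_lt1.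
have cvg_phi : phi_exists (R := R) w.
  apply: (series_le_cvg term_ge0 _ term_le); last by apply/cvg_ex; eexists; exact: cvg_geom.
  by move=> n; rewrite geometric_ge0 ?ratio_ge0.
split=> //; rewrite /PhiR normrN ger0_norm; last first.
  by apply: limr_ge => //; apply: nearW => n; apply: sumr_ge0 => i _.
rewrite -[X in _ <= X]mul1r -(cvg_lim (@Rhausdorff R) cvg_geom).
by apply: lim_series_le => //; apply/cvg_ex; eexists; exact: cvg_geom.
Qed.

End GeometricBound.

Definition right_min {d} {T : orderType d} (g : nat -> T) (k : nat) : Prop :=
  forall m, (k <= m)%N -> (g k <= g m)%O.

(* If every value of g is eventually exceeded for good, right minima of g occur
   beyond every index: start at k0 and jump to a later strictly smaller value;
   this can happen only finitely often before the threshold M of g k0. *)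
Lemma right_minima {d} {T : orderType d} {g : nat -> T} :
  (forall k0, exists M, forall m, (M <= m)%N -> (g k0 <= g m)%O) ->
  forall k0, exists2 k, (k0 <= k)%N & right_min g k.
Proof.
move=> grow k0; have [M gM] := grow k0.
suff ind n k : (forall m, (k + n <= m)%N -> (g k <= g m)%O) ->
    exists2 k', (k <= k')%N & right_min g k'.
  by apply: (ind (M - k0)%N) => m hm; apply: gM; lia.
elim: n k => [|n IH] k hk; first by exists k => // m km; apply: hk; rewrite addn0.
have [|/existsNP[m /not_implyP[km /negP]]] :=
  pselect (forall m, (k <= m)%N -> (g k <= g m)%O); first by exists k.
rewrite -ltNge => gmk.
have km' : (k < m)%N.
  by rewrite ltn_neqAle km andbT; apply/eqP => emk; move: gmk; rewrite emk ltxx.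
have [k' mk' hk'] : exists2 k', (m <= k')%N & right_min g k'.
  by apply: IH => m' hm'; apply: le_trans (ltW gmk) (hk m' _); lia.
by exists k' => //; exact: leq_trans (ltnW km') mk'.
Qed.

Section Density.
Context {R : realType}.

Lemma liminf_gt (u : nat -> \bar R) (c : R) : (c%:E < limn_einf u)%E ->
  exists2 r : R, c < r & exists n0, forall k, (n0 <= k)%N -> (r%:E <= u k)%E.
Proof.
rewrite limn_einf_lim (cvg_lim (@ereal_hausdorff R) (@cvg_einfs_sup R u)).
move=> /ereal_sup_gt [_ [n _ <-] hn].
have inf_le k : (n <= k)%N -> (einfs u n <= u k)%E.
  by move=> hk; apply: ereal_inf_lbound; exists k.
move: hn inf_le; case: (einfs u n) => [y| |] hn inf_le.
- exists ((c + y) / 2); first by move: hn; rewrite lte_fin; lra.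
  exists n => k /inf_le; apply: le_trans; rewrite lee_fin; move: hn; rewrite lte_fin; lra.
- by exists (c + 1); [lra | exists n => k /inf_le; apply: le_trans; rewrite leey].
- by move: hn; rewrite ltNge leNye.
Qed.

Definition excess (v : nat -> bool) (r : R) (l : nat) : R := (ones v l)%:R - r * l%:R.

Lemma excess_shift v r k n :
  excess (shiftw v k) r n = excess v r (k + n)%N - excess v r k.
Proof. by rewrite /excess ones_shift !natrD; ring. Qed.

(* Lower density above c gives some r > c whose excess grows linearly, so every value
   of the excess is eventually exceeded for good. *)
Lemma excess_grows {v} {c : R} :
  (c%:E < limn_einf (fun l : nat => ((ones v l)%:R / l%:R : R)%:E))%E ->
  exists2 r, c < r &
    forall k0, exists M, forall m, (M <= m)%N -> excess v r k0 <= excess v r m.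
Proof.
move=> /liminf_gt[r' cr' [n0 hn0]]; exists ((c + r') / 2); first lra.
set r := (c + r') / 2; have d_gt0 : 0 < r' - r by rewrite /r; lra.
have linear l : (n0 <= l)%N -> (r' - r) * l%:R <= excess v r l.
  move=> /hn0; rewrite lee_fin /excess; case: l => [|l].
    by rewrite /ones big_ord0 !mulr0 subr0.
  by rewrite ler_pdivlMr ?ltr0Sn // => h; lra.
move=> k0; set T := Num.truncn (excess v r k0 / (r' - r)).
exists (maxn n0 T.+1) => m hm; apply: le_trans (linear m _); last by lia.
have : excess v r k0 / (r' - r) < T.+1%:R := truncnS_gt _.
rewrite ltr_pdivrMr // => hT; apply: (le_trans (ltW hT)).
rewrite mulrC; apply: ler_wpM2l; [exact: ltW | rewrite ler_nat; lia].
Qed.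

Lemma right_min_dense {v r k} : right_min (excess v r) k ->
  forall n, r * n%:R <= (ones (shiftw v k) n)%:R.
Proof.
move=> rmin n; have := rmin (k + n)%N (leq_addr _ _).
by rewrite -subr_ge0 -excess_shift /excess subr_ge0.
Qed.

End Density.

(* A backward orbit driven by an aperiodic word and bounded along indices kk n >= n
   takes infinitely many values there (a finite range would make some value recur,
   hence v periodic), so its range is infinite with a limit point. *)
Lemma aperiodic_orbit_limit_point {R : realType} {x : nat -> R} {v}
    {kk : nat -> nat} {B : R} :
  (forall k, x k = branch (v k) (x k.+1)) -> aperiodic v ->
  (forall n, (n <= kk n)%N) -> (forall n, `|x (kk n)| <= B) ->
  infinite_set (range x) /\ exists l, limit_point (range x) l.
Proof.
move=> orbit ap kk_ge bound; set u := x \o kk.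
have u_sub : range u `<=` range x by move=> _ [n _ <-]; exists (kk n).
have u_inf : infinite_set (range u).
  move=> fin; apply: ap; have [y [A Ainf HA]] := finite_range_cst_subsequence fin.
  apply: (@recurrent_periodic _ x v orbit y) => N.
  have [n An nN] : exists2 n, A n & (N <= n)%N.
    apply: contrapT => noA; apply: Ainf; apply: sub_finite_set (finite_II N) => n An /=.
    by case: (ltnP n N) => // nN; case: noA; exists n.
  by exists (kk n); [exact: leq_trans nN (kk_ge n) | exact: (HA n).1].
have u_bnd : bounded_set (range u).
  exists B; split; first exact: num_real.
  by move=> M hM _ [n _ <-]; apply: le_trans (bound n) _; exact: ltW.
have [l hl] := infinite_bounded_limit_point_nonempty u_inf u_bnd.
split; first exact: sub_infinite_set u_sub u_inf.
by exists l => U hU; have [y [y1 y2 y3]] := hl U hU; exists y; split => //; exact: u_sub.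
Qed.

Theorem lemma26 (R : realType) (v : nat -> bool) :
  aperiodic v ->
  ((ln (2 : R) / ln 3)%:E <
     limn_einf (fun l : nat => ((ones v l)%:R / l%:R : R)%:E))%E ->
  (forall k : nat, phi_exists (R := R) (shiftw v k)) /\
  let S := [set x : R | exists k : nat, x = PhiR (shiftw v k)] in
  infinite_set S /\ exists x : R, limit_point S x.
Proof.
move=> ap dense.
have [r cr grows] := excess_grows dense.
have good := right_minima grows.
have bound k : right_min (excess v r) k ->
    phi_exists (R := R) (shiftw v k) /\ `|PhiR (R := R) (shiftw v k)| <= (1 - ratio r)^-1.
  by move=> /right_min_dense; exact: phi_bound cr.
have ex k : phi_exists (R := R) (shiftw v k).
  have [k' kk' /bound[ex' _]] := good k.
  by apply: (phi_exists_back v k (k' - k)); rewrite subnKC.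
split=> // S.
have /choice[kk hkk] : forall n, exists k, (n <= k)%N /\ right_min (excess v r) k.
  by move=> n; have [k nk rk] := good n; exists k.
have -> : S = range (fun k => PhiR (R := R) (shiftw v k)).
  by apply/seteqP; split => [_ [k ->] | _ [k _ <-]]; exists k.
apply: (aperiodic_orbit_limit_point (x := fun k => PhiR (shiftw v k)) (kk := kk)
  (PhiR_orbit ex) ap) => n; first exact: (hkk n).1.
exact: (bound _ (hkk n).2).2.
Qed.
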